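(* Let $p$ and $q$ be distinct primes and $n = p^2 q$. Then the non-nilradical graph $\Omega(\mathbb{Z}_n)$ is not very cost effective.
   Context: $\mathbb{Z}_n$ is the ring of residue classes modulo $n$. The non-nilradical graph $\Omega(\mathbb{Z}_n)$ has as vertices the non-nilpotent zero-divisors of $\mathbb{Z}_n$, two distinct vertices being adjacent iff their product is $0$. For a graph $G=(V,E)$ and $S\subseteq V$, a vertex $v\in S$ is very cost effective if $|N(v)\cap S| < |N(v)\cap (V\setminus S)|$; $S$ is very cost effective if every vertex of $S$ is. A bipartition $\{S, V\setminus S\}$ is very cost effective if both parts are very cost effective, and $G$ is very cost effective if it has a very cost effective bipartition. *)

From mathcomp Require Import all_boot all_order all_algebra.
From mathcomp Require Import boolp.
Set Implicit Arguments. Unset Strict Implicit. Unset Printing Implicit Defensive.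
Import GRing.Theory.
Local Open Scope ring_scope.

Definition is_nilpotent (R : comNzRingType) (x : R) : Prop :=
  exists k : nat, x ^+ k = 0.

Definition is_zero_divisor (R : comNzRingType) (x : R) : Prop :=
  x != 0 /\ exists y : R, y != 0 /\ x * y = 0.

Definition Omega_vertices (R : finComNzRingType) : {set R} :=
  [set x : R | `[< is_zero_divisor x /\ ~ is_nilpotent x >]].

Definition Omega_adj (R : finComNzRingType) (x y : R) : bool :=
  [&& x \in Omega_vertices R, y \in Omega_vertices R, x != y & x * y == 0].

Definition nbhd (T : finType) (V : {set T}) (adj : rel T) (v : T) : {set T} :=
  [set u in V | adj v u].

Definition vce_vertex (T : finType) (V : {set T}) (adj : rel T)
    (S : {set T}) (v : T) : bool :=
  (#|nbhd V adj v :&: S| < #|nbhd V adj v :&: (V :\: S)|)%N.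

Definition vce_set (T : finType) (V : {set T}) (adj : rel T) (S : {set T}) : bool :=
  [forall v in S, vce_vertex V adj S v].

Definition vce_bipartition (T : finType) (V : {set T}) (adj : rel T)
    (S : {set T}) : bool :=
  [&& S \subset V, vce_set V adj S & vce_set V adj (V :\: S)].

Definition very_cost_effective (T : finType) (V : {set T}) (adj : rel T) : Prop :=
  exists S : {set T}, vce_bipartition V adj S.

From mathcomp Require Import all_boot all_order all_algebra.
From mathcomp Require Import boolp zify.
Import GRing.Theory.
Local Open Scope ring_scope.

(* In Z_(p^2 q) the residue p is a non-nilpotent zero-divisor (p * pq = 0), but
   p y = 0 forces pq | y, hence y^2 = 0: every neighbour candidate of p is
   nilpotent, so p is an isolated vertex of Omega.  An isolated vertex has
   0 neighbours on either side of any bipartition, so it cannot be very cost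
   effective in whichever part contains it. *)

Lemma isolated_not_very_cost_effective (T : finType) (V : {set T}) (adj : rel T)
    (v : T) :
  v \in V -> nbhd V adj v = set0 -> ~ very_cost_effective V adj.
Proof.
move=> vV nb0 [S /and3P [_ /forallP vceS /forallP vceVS]].
have vce_isolated (A : {set T}) : ~~ vce_vertex V adj A v.
  by rewrite /vce_vertex nb0 !set0I cards0.
case vS: (v \in S).
- by move: (vceS v); rewrite vS /= (negbTE (vce_isolated S)).
- have vVS : v \in V :\: S by rewrite inE vS vV.
  by move: (vceVS v); rewrite vVS /= (negbTE (vce_isolated _)).
Qed.

Lemma Zp_natr_eq0 (n a : nat) : (1 < n)%N -> ((a%:R : 'Z_n) == 0) = (n %| a)%N.
Proof. by move=> n_gt1; rewrite -val_eqE /= val_Zp_nat. Qed.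

Section ResidueOfP.

Variables p q : nat.
Hypotheses (p_pr : prime p) (q_pr : prime q) (p_neq_q : p != q).

Local Notation Zn := 'Z_(p ^ 2 * q).

Let p_gt1 : (1 < p)%N. Proof. exact: prime_gt1. Qed.
Let q_gt1 : (1 < q)%N. Proof. exact: prime_gt1. Qed.
Let n_gt1 : (1 < p ^ 2 * q)%N. Proof. nia. Qed.

Lemma natr_p_zero_divisor : is_zero_divisor (p%:R : Zn).
Proof.
split; first by rewrite Zp_natr_eq0 //; apply/negP => /dvdn_leq; nia.
exists (p * q)%:R; split; first by rewrite Zp_natr_eq0 //; apply/negP => /dvdn_leq; nia.
by apply/eqP; rewrite -natrM Zp_natr_eq0 // mulnA mulnn.
Qed.

Lemma natr_p_not_nilpotent : ~ is_nilpotent (p%:R : Zn).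
Proof.
move=> [k /eqP]; rewrite -natrX Zp_natr_eq0 // => /(dvdn_trans (dvdn_mull _ (dvdnn q))).
by rewrite Euclid_dvdX // dvdn_prime2 // eq_sym (negbTE p_neq_q).
Qed.

Lemma natr_p_in_Omega : (p%:R : Zn) \in Omega_vertices Zn.
Proof.
rewrite inE; apply/asboolP.
by split; [exact: natr_p_zero_divisor | exact: natr_p_not_nilpotent].
Qed.

Lemma natr_p_annihilated_sqr0 (y : Zn) : p%:R * y = 0 -> y ^+ 2 = 0.
Proof.
rewrite -(natr_Zp y); move: (val y) => m /eqP.
rewrite -natrM Zp_natr_eq0 // => n_dvd_pm.
have pq_dvd_m : (p * q %| m)%N.
  by rewrite -(dvdn_pmul2l (prime_gt0 p_pr)) mulnA mulnn.
apply/eqP; rewrite -natrX Zp_natr_eq0 //.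
apply: dvdn_trans (dvdn_exp2r 2 pq_dvd_m).
by rewrite expnMn dvdn_mul // dvdn_exp.
Qed.

Lemma natr_p_isolated : nbhd (Omega_vertices Zn) (@Omega_adj Zn) p%:R = set0.
Proof.
apply/setP => y; rewrite !inE; apply/negbTE/andP => -[_ /and4P [_ yV _ /eqP py0]].
move: yV; rewrite inE => /asboolP [_]; apply.
by exists 2%N; exact: natr_p_annihilated_sqr0.
Qed.

End ResidueOfP.

Theorem mainTheorem6 (p q : nat) :
  prime p -> prime q -> p != q ->
  ~ very_cost_effective (Omega_vertices 'Z_(p ^ 2 * q))
                        (@Omega_adj 'Z_(p ^ 2 * q)).
Proof.
move=> p_pr q_pr p_neq_q.
apply: (@isolated_not_very_cost_effective _ _ _ (p%:R)).
- exact: natr_p_in_Omega.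
- exact: natr_p_isolated.
Qed.
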